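(* Let $Q$ be a groupoid quantale with base locale $A$, and let $G$ be its associated involutive localic graph, consisting of the locales $G_0,G_1,G_2$ and the maps $d,r,i,u,m$ described in the context. Then $G$ is an open localic groupoid.
   Context: Let $A$ be a locale (frame), whose multiplication is $\wedge$. An $A$-$A$-bimodule is a sup-lattice $M$ with actions $(a,m)\mapsto a\triangleright m$ and $(m,a)\mapsto m\triangleleft a$ ($a\in A$, $m\in M$), each preserving arbitrary joins in each variable, such that $1_A\triangleright m=m$, $(a\wedge b)\triangleright m=a\triangleright(b\triangleright m)$, $m\triangleleft 1_A=m$, $m\triangleleft(a\wedge b)=(m\triangleleft a)\triangleleft b$, and $(a\triangleright m)\triangleleft b=a\triangleright(m\triangleleft b)$. An $A$-$A$-quantale is an $A$-$A$-bimodule $Q$ with an associative multiplication $(x,y)\mapsto xy$ preserving arbitrary joins in each variable, such that $(a\triangleright x)y=a\triangleright(xy)$, $(x\triangleleft a)y=x(a\triangleright y)$, $(xy)\triangleleft a=x(y\triangleleft a)$. It is involutive if it has a join-preserving map $x\mapsto x^*$ with $x^{**}=x$, $(xy)^*=y^*x^*$ and $(a\triangleright(x\triangleleft b))^*=b\triangleright(x^*\triangleleft a)$. $1_Q$ is the top of $Q$. A support is a join-preserving map $\varsigma:Q\to A$ with $\varsigma(1_Q)=1_A$, $\varsigma(x)\triangleright y\le xx^*y$ and $\varsigma(x)\triangleright x=x$ for all $x,y\in Q$; it is equivariant if $\varsigma(a\triangleright x)=a\wedge\varsigma(x)$ for all $a\in A,x\in Q$. A based quantal frame is an involutive $A$-$A$-quantale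 whose underlying lattice is a frame and such that $(a\triangleright x)\wedge y=a\triangleright(x\wedge y)$ and $(x\triangleleft a)\wedge y=(x\wedge y)\triangleleft a$. It is reflexive if equipped with a frame homomorphism $\upsilon:Q\to A$ with $\upsilon(a\triangleright 1_Q)=a=\upsilon(1_Q\triangleleft a)$ for all $a\in A$. Let $Q\otimes_A Q$ be the quotient of the sup-lattice tensor product $Q\otimes Q$ by the relations $x\otimes(a\triangleright y)=(x\triangleleft a)\otimes y$; the multiplication factors as a sup-lattice homomorphism $\mu_A:Q\otimes_AQ\to Q$, $x\otimes y\mapsto xy$, and $Q$ is multiplicative if the right adjoint of $\mu_A$ preserves arbitrary joins. $Q$ satisfies the unit laws if $\bigvee_{xy\le a}\upsilon(x)\triangleright y=a$ for all $a\in Q$, and the inverse law if $\upsilon(a)\triangleright 1_Q=\bigvee_{xy^*\le a}x\wedge y$ for all $a\in Q$. A groupoid quantale is a multiplicative, equivariantly supported, reflexive based quantal frame satisfying the unit laws and the inverse law. Its associated involutive localic graph: locales $G_0,G_1$ with $\mathcal O(G_0)=A$, $\mathcal O(G_1)=Q$; $d:G_1\to G_0$ with $d^*(a)=a\triangleright 1_Q$; $i:G_1\to G_1$ with $i^*(x)=x^*$; $r=d\circ i$; $u:G_0\to G_1$ with $u^*=\upsilon$; $G_2$ the pullback of $r$ (via the first projection) and $d$ (via the second), with $\mathcal O(G_2)=Q\otimes_AQ$; and $m:G_2\to G_1$ with $m^*(a)=\bigvee_{xy\le a}x\otimes y$. A localic groupoid is open if $d$ is an open map. *)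

(* Locales are represented by their frames of opens; a locale map f : X -> Y
   is represented by its inverse-image frame homomorphism f^* : O(Y) -> O(X). *)

Record frame_ops := FrameOps {
  fcar :> Type;
  fle : fcar -> fcar -> Prop;
  fsup : (fcar -> Prop) -> fcar;
  fmeet : fcar -> fcar -> fcar;
  ftop : fcar }.

Definition image {X Y : Type} (f : X -> Y) (P : X -> Prop) : Y -> Prop :=
  fun y => exists x, P x /\ y = f x.

Record is_frame (F : frame_ops) : Prop := {
  fr_refl : forall x, fle F x x;
  fr_trans : forall x y z, fle F x y -> fle F y z -> fle F x z;
  fr_antisym : forall x y, fle F x y -> fle F y x -> x = y;
  fr_sup_ub : forall (P : F -> Prop) x, P x -> fle F x (fsup F P);
  fr_sup_least : forall (P : F -> Prop) u, (forall x, P x -> fle F x u) -> fle F (fsup F P) u;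
  fr_meet_l : forall x y, fle F (fmeet F x y) x;
  fr_meet_r : forall x y, fle F (fmeet F x y) y;
  fr_meet_glb : forall x y z, fle F z x -> fle F z y -> fle F z (fmeet F x y);
  fr_top : forall x, fle F x (ftop F);
  fr_distr : forall x (P : F -> Prop),
      fmeet F x (fsup F P) = fsup F (image (fmeet F x) P) }.

Definition sup_pres (F G : frame_ops) (f : F -> G) : Prop :=
  forall P : F -> Prop, f (fsup F P) = fsup G (image f P).

Record frame_hom (F G : frame_ops) (f : F -> G) : Prop := {
  fh_sup : sup_pres F G f;
  fh_meet : forall x y, f (fmeet F x y) = fmeet G (f x) (f y);
  fh_top : f (ftop F) = ftop G }.

Section Quantales.
Variables (A Q : frame_ops).
Variables (la : A -> Q -> Q) (ra : Q -> A -> Q) (mul : Q -> Q -> Q)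
          (inv : Q -> Q) (ups : Q -> A).

Record bimodule : Prop := {
  bm_la_supl : forall (P : A -> Prop) m, la (fsup A P) m = fsup Q (image (fun a => la a m) P);
  bm_la_supr : forall a (P : Q -> Prop), la a (fsup Q P) = fsup Q (image (la a) P);
  bm_ra_supl : forall (P : Q -> Prop) a, ra (fsup Q P) a = fsup Q (image (fun m => ra m a) P);
  bm_ra_supr : forall m (P : A -> Prop), ra m (fsup A P) = fsup Q (image (ra m) P);
  bm_la_one : forall m, la (ftop A) m = m;
  bm_la_meet : forall a b m, la (fmeet A a b) m = la a (la b m);
  bm_ra_one : forall m, ra m (ftop A) = m;
  bm_ra_meet : forall m a b, ra m (fmeet A a b) = ra (ra m a) b;
  bm_assoc : forall a m b, ra (la a m) b = la a (ra m b) }.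

Record quantale : Prop := {
  q_bimodule : bimodule;
  q_assoc : forall x y z, mul (mul x y) z = mul x (mul y z);
  q_supl : forall (P : Q -> Prop) y, mul (fsup Q P) y = fsup Q (image (fun x => mul x y) P);
  q_supr : forall x (P : Q -> Prop), mul x (fsup Q P) = fsup Q (image (mul x) P);
  q_la : forall a x y, mul (la a x) y = la a (mul x y);
  q_mid : forall x a y, mul (ra x a) y = mul x (la a y);
  q_ra : forall x y a, ra (mul x y) a = mul x (ra y a) }.

Record involutive : Prop := {
  inv_sup : sup_pres Q Q inv;
  inv_inv : forall x, inv (inv x) = x;
  inv_mul : forall x y, inv (mul x y) = mul (inv y) (inv x);
  inv_act : forall a x b, inv (la a (ra x b)) = la b (ra (inv x) a) }.

Record based_quantal_frame : Prop := {
  bq_frameA : is_frame A;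
  bq_frameQ : is_frame Q;
  bq_quantale : quantale;
  bq_involutive : involutive;
  bq_la_meet : forall a x y, fmeet Q (la a x) y = la a (fmeet Q x y);
  bq_ra_meet : forall x a y, fmeet Q (ra x a) y = ra (fmeet Q x y) a }.

Record support (sg : Q -> A) : Prop := {
  sp_sup : sup_pres Q A sg;
  sp_top : sg (ftop Q) = ftop A;
  sp_le : forall x y, fle Q (la (sg x) y) (mul (mul x (inv x)) y);
  sp_fix : forall x, la (sg x) x = x }.

Definition equivariant (sg : Q -> A) : Prop :=
  forall a x, sg (la a x) = fmeet A a (sg x).

Definition reflexive : Prop :=
  frame_hom Q A ups /\
  (forall a, ups (la a (ftop Q)) = a) /\ (forall a, ups (ra (ftop Q) a) = a).

(* ---- the sup-lattice Q (x)_A Q, as the lattice of "A-balanced tensor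
   ideals" of Q x Q (the standard presentation of the tensor product of
   sup-lattices, quotiented by x (x) (a |> y) = (x <| a) (x) y) ---- *)

Definition tideal (S : Q -> Q -> Prop) : Prop :=
  (forall x y x' y', S x y -> fle Q x' x -> fle Q y' y -> S x' y') /\
  (forall (P : Q -> Prop) y, (forall x, P x -> S x y) -> S (fsup Q P) y) /\
  (forall x (P : Q -> Prop), (forall y, P y -> S x y) -> S x (fsup Q P)) /\
  (forall x a y, S x (la a y) <-> S (ra x a) y).

Definition tint (C : (Q -> Q -> Prop) -> Prop) : Q -> Q -> Prop :=
  fun x y => forall R, C R -> tideal R -> R x y.

Lemma tint_ideal C : tideal (tint C).
Proof.
  unfold tideal, tint; split; [|split; [|split]].
  - intros x y x' y' H Hx Hy R HC HR.
    pose proof HR as HR'. destruct HR as [Hd _]. exact (Hd x y x' y' (H R HC HR') Hx Hy).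
  - intros P y H R HC HR. pose proof HR as HR'.
    destruct HR as [_ [Hl _]]. apply Hl. intros x Px. exact (H x Px R HC HR').
  - intros x P H R HC HR. pose proof HR as HR'.
    destruct HR as [_ [_ [Hr _]]]. apply Hr. intros y Py. exact (H y Py R HC HR').
  - intros x a y; split; intros H R HC HR; pose proof HR as HR';
      destruct HR as [_ [_ [_ Ha]]]; apply Ha; exact (H R HC HR').
Qed.

Definition tcar : Type := { S : Q -> Q -> Prop | tideal S }.

Definition tmk (C : (Q -> Q -> Prop) -> Prop) : tcar :=
  exist _ (tint C) (tint_ideal C).

Definition tle (S T : tcar) : Prop :=
  forall x y, proj1_sig S x y -> proj1_sig T x y.

Definition tsup (F : tcar -> Prop) : tcar :=
  tmk (fun R => forall S, F S -> forall x y, proj1_sig S x y -> R x y).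

Definition tmeet (S T : tcar) : tcar :=
  tmk (fun R => R = proj1_sig S \/ R = proj1_sig T).

Definition ttop : tcar := tmk (fun _ => False).

Definition tensor_frame : frame_ops := FrameOps tcar tle tsup tmeet ttop.

Definition tens (x y : Q) : tcar := tmk (fun R => R x y).

Definition mu_A (S : tcar) : Q :=
  fsup Q (fun z => exists x y, proj1_sig S x y /\ z = mul x y).

Definition mu_right (a : Q) : tcar := tsup (fun t => fle Q (mu_A t) a).

Definition multiplicative : Prop :=
  sup_pres Q tensor_frame mu_right.

Definition unit_laws : Prop :=
  forall a, fsup Q (fun z => exists x y, fle Q (mul x y) a /\ z = la (ups x) y) = a.

Definition inverse_law : Prop :=
  forall a, la (ups a) (ftop Q) =
            fsup Q (fun z => exists x y, fle Q (mul x (inv y)) a /\ z = fmeet Q x y).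

Definition groupoid_quantale : Prop :=
  based_quantal_frame /\ multiplicative /\
  (exists sg, support sg /\ equivariant sg) /\
  reflexive /\ unit_laws /\ inverse_law.

Definition dstar (a : A) : Q := la a (ftop Q).
Definition rstar (a : A) : Q := inv (dstar a).          (* r^* = (d o i)^* = i^* o d^* *)
Definition pi1 (x : Q) : tcar := tens x (ftop Q).
Definition pi2 (y : Q) : tcar := tens (ftop Q) y.
Definition mstar (a : Q) : tcar :=
  tsup (fun t => exists x y, fle Q (mul x y) a /\ t = tens x y).

End Quantales.

(* (G2, p1, p2) is the pullback in Loc of r : G1 -> G0 (via p1) and
   d : G1 -> G0 (via p2); stated on frames: pushout in Frm. *)
Definition is_pullback (G0 G1 G2 : frame_ops) (rs ds : G0 -> G1) (p1 p2 : G1 -> G2) : Prop :=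
  (forall a, p1 (rs a) = p2 (ds a)) /\
  forall (X : frame_ops), is_frame X ->
  forall (f g : G1 -> X), frame_hom G1 X f -> frame_hom G1 X g ->
  (forall a, f (rs a) = g (ds a)) ->
  exists h : G2 -> X, frame_hom G2 X h /\
    (forall q, h (p1 q) = f q) /\ (forall q, h (p2 q) = g q) /\
    (forall h' : G2 -> X, frame_hom G2 X h' ->
       (forall q, h' (p1 q) = f q) -> (forall q, h' (p2 q) = g q) ->
       forall t, h' t = h t).

(* Axioms involving composable
   pairs are stated on generalized elements X -> G1 (frame homs G1 -> X),
   pairings <x,y> : X -> G2 being the maps h with h o p1^* = x^*, h o p2^* = y^*. *)
Record localic_groupoid (G0 G1 G2 : frame_ops) (ds rs : G0 -> G1) (us : G1 -> G0)
    (is_ : G1 -> G1) (ms p1 p2 : G1 -> G2) : Prop := {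
  lg_frame0 : is_frame G0;
  lg_frame1 : is_frame G1;
  lg_frame2 : is_frame G2;
  lg_hom_d : frame_hom G0 G1 ds;
  lg_hom_r : frame_hom G0 G1 rs;
  lg_hom_u : frame_hom G1 G0 us;
  lg_hom_i : frame_hom G1 G1 is_;
  lg_hom_m : frame_hom G1 G2 ms;
  lg_hom_p1 : frame_hom G1 G2 p1;
  lg_hom_p2 : frame_hom G1 G2 p2;
  lg_pullback : is_pullback G0 G1 G2 rs ds p1 p2;
  (* d o u = id, r o u = id, i o i = id, r = d o i *)
  lg_du : forall a, us (ds a) = a;
  lg_ru : forall a, us (rs a) = a;
  lg_ii : forall x, is_ (is_ x) = x;
  lg_di : forall a, is_ (ds a) = rs a;
  (* d o m = d o p1, r o m = r o p2 *)
  lg_dm : forall a, ms (ds a) = p1 (ds a);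
  lg_rm : forall a, ms (rs a) = p2 (rs a);
  (* associativity: m(m(x,y),z) = m(x,m(y,z)) *)
  lg_assoc : forall X, is_frame X ->
    forall x y z : G1 -> X, frame_hom G1 X x -> frame_hom G1 X y -> frame_hom G1 X z ->
    forall h1 h2 h3 h4 : G2 -> X,
      frame_hom G2 X h1 -> frame_hom G2 X h2 -> frame_hom G2 X h3 -> frame_hom G2 X h4 ->
      (forall q, h1 (p1 q) = x q) -> (forall q, h1 (p2 q) = y q) ->
      (forall q, h2 (p1 q) = y q) -> (forall q, h2 (p2 q) = z q) ->
      (forall q, h3 (p1 q) = h1 (ms q)) -> (forall q, h3 (p2 q) = z q) ->
      (forall q, h4 (p1 q) = x q) -> (forall q, h4 (p2 q) = h2 (ms q)) ->
      forall q, h3 (ms q) = h4 (ms q);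
  (* left unit: m(u(d x), x) = x *)
  lg_unit_l : forall X, is_frame X -> forall x : G1 -> X, frame_hom G1 X x ->
    forall h : G2 -> X, frame_hom G2 X h ->
      (forall q, h (p1 q) = x (ds (us q))) -> (forall q, h (p2 q) = x q) ->
      forall q, h (ms q) = x q;
  (* right unit: m(x, u(r x)) = x *)
  lg_unit_r : forall X, is_frame X -> forall x : G1 -> X, frame_hom G1 X x ->
    forall h : G2 -> X, frame_hom G2 X h ->
      (forall q, h (p1 q) = x q) -> (forall q, h (p2 q) = x (rs (us q))) ->
      forall q, h (ms q) = x q;
  (* m(x, i x) = u(d x) *)
  lg_inv_r : forall X, is_frame X -> forall x : G1 -> X, frame_hom G1 X x ->
    forall h : G2 -> X, frame_hom G2 X h ->
      (forall q, h (p1 q) = x q) -> (forall q, h (p2 q) = x (is_ q)) ->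
      forall q, h (ms q) = x (ds (us q));
  (* m(i x, x) = u(r x) *)
  lg_inv_l : forall X, is_frame X -> forall x : G1 -> X, frame_hom G1 X x ->
    forall h : G2 -> X, frame_hom G2 X h ->
      (forall q, h (p1 q) = x (is_ q)) -> (forall q, h (p2 q) = x q) ->
      forall q, h (ms q) = x (rs (us q)) }.

Definition open_map (X Y : frame_ops) (fs : X -> Y) : Prop :=
  exists l : Y -> X,
    (forall y x, fle X (l y) x <-> fle Y y (fs x)) /\
    (forall y x, l (fmeet Y y (fs x)) = fmeet X (l y) x).

Definition open_localic_groupoid (G0 G1 G2 : frame_ops) (ds rs : G0 -> G1) (us : G1 -> G0)
    (is_ : G1 -> G1) (ms p1 p2 : G1 -> G2) : Prop :=
  localic_groupoid G0 G1 G2 ds rs us is_ ms p1 p2 /\ open_map G0 G1 ds.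

(* Q ⊗_A Q is realised as the frame of tensor ideals (down-closed, join-closed,
   A-balanced relations on Q), in which x ⊗ y = (x ⊗ 1) ∧ (1 ⊗ y).  Hence a frame
   map h out of it is determined by its components h ∘ π₁^* and h ∘ π₂^*, namely
   h S = ⋁_{(a,b) ∈ S} h (π₁^* a) ∧ h (π₂^* b), and every pair of components that
   agree on r^* and d^* arises this way: this is the pullback property of G₂.
   The ideal m^*(q) = {(a, b) | ab ≤ q} is the right adjoint of μ_A, a frame map by
   multiplicativity, so on generalized elements every groupoid axiom becomes an
   identity between joins ⋁_{ab ≤ q} f a ∧ g b in Q: associativity of the
   multiplication, the unit laws, and the inverse law.  Finally the support ς is
   left adjoint to d^*, and equivariance is Frobenius reciprocity, so d is open. *)

From Stdlib Require Import FunctionalExtensionality PropExtensionality ProofIrrelevance.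

Section Frames.
Context {F : frame_ops} (HF : is_frame F).

Lemma fle_refl x : fle F x x. Proof. exact (fr_refl F HF x). Qed.
Lemma fle_trans x y z : fle F x y -> fle F y z -> fle F x z. Proof. exact (fr_trans F HF x y z). Qed.
Lemma fle_antisym x y : fle F x y -> fle F y x -> x = y. Proof. exact (fr_antisym F HF x y). Qed.
Lemma fsup_ub (P : F -> Prop) x : P x -> fle F x (fsup F P). Proof. exact (fr_sup_ub F HF P x). Qed.
Lemma fsup_least (P : F -> Prop) u : (forall x, P x -> fle F x u) -> fle F (fsup F P) u.
Proof. exact (fr_sup_least F HF P u). Qed.
Lemma fmeet_l x y : fle F (fmeet F x y) x. Proof. exact (fr_meet_l F HF x y). Qed.
Lemma fmeet_r x y : fle F (fmeet F x y) y. Proof. exact (fr_meet_r F HF x y). Qed.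
Lemma fmeet_glb x y z : fle F z x -> fle F z y -> fle F z (fmeet F x y).
Proof. exact (fr_meet_glb F HF x y z). Qed.
Lemma ftop_ge x : fle F x (ftop F). Proof. exact (fr_top F HF x). Qed.

Lemma fmeet_comm x y : fmeet F x y = fmeet F y x.
Proof. apply fle_antisym; apply fmeet_glb; (apply fmeet_l || apply fmeet_r). Qed.

Lemma fmeet_assoc x y z : fmeet F (fmeet F x y) z = fmeet F x (fmeet F y z).
Proof. apply fle_antisym; repeat apply fmeet_glb; eauto using fle_trans, fmeet_l, fmeet_r. Qed.

Lemma fmeet_mono x x' y y' : fle F x x' -> fle F y y' -> fle F (fmeet F x y) (fmeet F x' y').
Proof. intros; apply fmeet_glb; eauto using fle_trans, fmeet_l, fmeet_r. Qed.

Lemma fmeet_eq_l x y : fle F x y -> fmeet F x y = x.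
Proof. intros; apply fle_antisym; auto using fmeet_l, fmeet_glb, fle_refl. Qed.

Lemma fmeet_eq_r x y : fle F x y -> fmeet F y x = x.
Proof. intros; rewrite fmeet_comm; now apply fmeet_eq_l. Qed.

Lemma fmeet_top_l x : fmeet F (ftop F) x = x. Proof. apply fmeet_eq_r, ftop_ge. Qed.
Lemma fmeet_top_r x : fmeet F x (ftop F) = x. Proof. apply fmeet_eq_l, ftop_ge. Qed.
Lemma fmeet_idem x : fmeet F x x = x. Proof. apply fmeet_eq_l, fle_refl. Qed.

Lemma fmeet_ACA x y x' y' :
  fmeet F (fmeet F x y) (fmeet F x' y') = fmeet F (fmeet F x x') (fmeet F y y').
Proof.
  rewrite !fmeet_assoc; f_equal.
  rewrite <- !fmeet_assoc; f_equal; apply fmeet_comm.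
Qed.

Lemma fmeet_sup_le (P : F -> Prop) x w :
  (forall p, P p -> fle F (fmeet F x p) w) -> fle F (fmeet F x (fsup F P)) w.
Proof. intros H; rewrite (fr_distr F HF); apply fsup_least; intros z [p [Hp ->]]; auto. Qed.

Lemma fsup_meet_le (P : F -> Prop) x w :
  (forall p, P p -> fle F (fmeet F p x) w) -> fle F (fmeet F (fsup F P) x) w.
Proof.
  intros H; rewrite fmeet_comm; apply fmeet_sup_le.
  intros p Hp; rewrite fmeet_comm; auto.
Qed.

Lemma fsup_ext (P P' : F -> Prop) : (forall z, P z <-> P' z) -> fsup F P = fsup F P'.
Proof.
  intros H; apply fle_antisym; apply fsup_least; intros z Hz; apply fsup_ub, H; exact Hz.
Qed.

End Frames.

Lemma sup_pres_mono {F G : frame_ops} (HF : is_frame F) (HG : is_frame G) (f : F -> G) :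
  sup_pres F G f -> forall x y, fle F x y -> fle G (f x) (f y).
Proof.
  intros Hf x y Hxy.
  assert (Ey : fsup F (fun z => z = x \/ z = y) = y).
  { apply (fle_antisym HF).
    - apply (fsup_least HF); intros z [-> | ->]; auto using fle_refl.
    - apply (fsup_ub HF); auto. }
  rewrite <- Ey, Hf; apply (fsup_ub HG); exists x; auto.
Qed.

Lemma frame_hom_mono {F G : frame_ops} (HF : is_frame F) (HG : is_frame G) (f : F -> G) :
  frame_hom F G f -> forall x y, fle F x y -> fle G (f x) (f y).
Proof. intros Hf; apply (sup_pres_mono HF HG), Hf. Qed.

Lemma frame_hom_comp (F G H : frame_ops) (f : F -> G) (g : G -> H) :
  frame_hom F G f -> frame_hom G H g -> frame_hom F H (fun x => g (f x)).
Proof.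
  intros [f_sup f_meet f_top] [g_sup g_meet g_top]; split.
  - intros P; rewrite f_sup, g_sup; f_equal.
    apply functional_extensionality; intro z; apply propositional_extensionality; split.
    + intros [y [[x [Hx ->]] ->]]; exists x; auto.
    + intros [x [Hx ->]]; exists (f x); split; auto; exists x; auto.
  - intros; rewrite f_meet, g_meet; auto.
  - rewrite f_top, g_top; auto.
Qed.

Section GroupoidQuantale.
Variables (A Q : frame_ops) (la : A -> Q -> Q) (ra : Q -> A -> Q)
  (mul : Q -> Q -> Q) (inv : Q -> Q).
Hypotheses (HA : is_frame A) (HQ : is_frame Q)
  (Hq : quantale A Q la ra mul) (Hinv : involutive A Q la ra mul inv)
  (la_meet : forall a x y, fmeet Q (la a x) y = la a (fmeet Q x y))
  (ra_meet : forall x a y, fmeet Q (ra x a) y = ra (fmeet Q x y) a).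

Local Notation le := (fle Q).
Local Notation meet := (fmeet Q).
Local Notation top := (ftop Q).

Local Notation ds := (dstar A Q la).
Local Notation rs := (rstar A Q la inv).

Let Hbm : bimodule A Q la ra := q_bimodule _ _ _ _ _ Hq.

Lemma la_mono_l a b m : fle A a b -> le (la a m) (la b m).
Proof. apply (sup_pres_mono HA HQ (fun a => la a m)); intro P; apply Hbm. Qed.

Lemma la_mono_r a m n : le m n -> le (la a m) (la a n).
Proof. apply (sup_pres_mono HQ HQ (la a)); intro P; apply Hbm. Qed.

Lemma ra_mono_l a m n : le m n -> le (ra m a) (ra n a).
Proof. apply (sup_pres_mono HQ HQ (fun m => ra m a)); intro P; apply Hbm. Qed.

Lemma mul_mono x x' y y' : le x x' -> le y y' -> le (mul x y) (mul x' y').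
Proof.
  intros Hx Hy; apply (fle_trans HQ _ (mul x' y)).
  - revert Hx; apply (sup_pres_mono HQ HQ (fun x => mul x y)); intro P; apply Hq.
  - revert Hy; apply (sup_pres_mono HQ HQ (mul x')); intro P; apply Hq.
Qed.

Lemma inv_inv x : inv (inv x) = x. Proof. apply Hinv. Qed.
Lemma inv_mul x y : inv (mul x y) = mul (inv y) (inv x). Proof. apply Hinv. Qed.

Lemma inv_inj x y : inv x = inv y -> x = y.
Proof. intros E; now rewrite <- (inv_inv x), E, inv_inv. Qed.

Lemma inv_mono x y : le x y -> le (inv x) (inv y).
Proof. apply (sup_pres_mono HQ HQ inv), Hinv. Qed.

Lemma inv_le_l x y : le (inv x) y <-> le x (inv y).
Proof. split; intro H; [rewrite <- (inv_inv x) | rewrite <- (inv_inv y)]; now apply inv_mono. Qed.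

Lemma inv_top : inv top = top.
Proof. apply (fle_antisym HQ); [apply (ftop_ge HQ) | apply inv_le_l, (ftop_ge HQ)]. Qed.

Lemma inv_meet x y : inv (meet x y) = meet (inv x) (inv y).
Proof.
  apply (fle_antisym HQ).
  - apply (fmeet_glb HQ); apply inv_mono; [apply (fmeet_l HQ) | apply (fmeet_r HQ)].
  - apply inv_le_l, (fmeet_glb HQ); apply inv_le_l; [apply (fmeet_l HQ) | apply (fmeet_r HQ)].
Qed.

Lemma inv_hom : frame_hom Q Q inv.
Proof. split; [apply Hinv | exact inv_meet | exact inv_top]. Qed.

Lemma inv_la a x : inv (la a x) = ra (inv x) a.
Proof.
  pose proof (inv_act _ _ _ _ _ _ Hinv a x (ftop A)) as H.
  now rewrite (bm_ra_one _ _ _ _ Hbm), (bm_la_one _ _ _ _ Hbm) in H.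
Qed.

Lemma inv_ra x a : inv (ra x a) = la a (inv x).
Proof.
  pose proof (inv_act _ _ _ _ _ _ Hinv (ftop A) x a) as H.
  now rewrite (bm_ra_one _ _ _ _ Hbm), (bm_la_one _ _ _ _ Hbm) in H.
Qed.

Lemma meet_la_top a y : meet (la a top) y = la a y.
Proof. now rewrite la_meet, (fmeet_top_l HQ). Qed.

Lemma meet_ra_top a y : meet (ra top a) y = ra y a.
Proof. now rewrite ra_meet, (fmeet_top_l HQ). Qed.

Lemma rstar_eq a : rs a = ra top a.
Proof. unfold rstar, dstar; now rewrite inv_la, inv_top. Qed.

Lemma meet_rstar x c : meet x (rs c) = ra x c.
Proof. now rewrite rstar_eq, (fmeet_comm HQ), meet_ra_top. Qed.

Lemma dstar_hom : frame_hom A Q ds.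
Proof.
  unfold dstar; split.
  - intro P; apply Hbm.
  - intros a b; now rewrite (bm_la_meet _ _ _ _ Hbm), meet_la_top.
  - apply Hbm.
Qed.

Lemma rstar_hom : frame_hom A Q rs.
Proof. exact (frame_hom_comp _ _ _ _ _ dstar_hom inv_hom). Qed.

Local Notation is_tideal := (tideal A Q la ra).
Local Notation T := (tcar A Q la ra).
Local Notation QxQ := (tensor_frame A Q la ra).
Local Notation tmem := (@proj1_sig _ is_tideal).
Local Notation "x ⊗ y" := (tens A Q la ra x y) (at level 40, left associativity).
Local Notation p1 := (pi1 A Q la ra).
Local Notation p2 := (pi2 A Q la ra).
Local Notation ms := (mstar A Q la ra mul).

Ltac unfold_QxQ := unfold tensor_frame in *; cbn [fle fsup fmeet ftop fcar] in *.

Lemma tideal_down R : is_tideal R -> forall x y x' y', R x y -> le x' x -> le y' y -> R x' y'.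
Proof. intros [H _]; exact H. Qed.
Lemma tideal_supl R : is_tideal R -> forall (P : Q -> Prop) y, (forall x, P x -> R x y) -> R (fsup Q P) y.
Proof. intros [_ [H _]]; exact H. Qed.
Lemma tideal_supr R : is_tideal R -> forall x (P : Q -> Prop), (forall y, P y -> R x y) -> R x (fsup Q P).
Proof. intros [_ [_ [H _]]]; exact H. Qed.
Lemma tideal_bal R : is_tideal R -> forall x a y, R x (la a y) <-> R (ra x a) y.
Proof. intros [_ [_ [_ H]]]; exact H. Qed.

Lemma tmem_tideal (S : T) : is_tideal (tmem S). Proof. exact (proj2_sig S). Qed.

Lemma tcar_ext (S S' : T) : (forall x y, tmem S x y <-> tmem S' x y) -> S = S'.
Proof.
  destruct S as [s Hs], S' as [s' Hs']; cbn; intros H.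
  assert (s = s') as <-.
  { do 2 (apply functional_extensionality; intro).
    apply propositional_extensionality, H. }
  f_equal; apply proof_irrelevance.
Qed.

Lemma tens_in x y : tmem (x ⊗ y) x y.
Proof. intros R HR _; exact HR. Qed.

Lemma tens_least R x y : is_tideal R -> R x y -> forall a b, tmem (x ⊗ y) a b -> R a b.
Proof. intros HR Hxy a b H; exact (H R Hxy HR). Qed.

Lemma tsup_in (F : T -> Prop) S x y : F S -> tmem S x y -> tmem (tsup A Q la ra F) x y.
Proof. intros HS Hxy R HR _; exact (HR S HS x y Hxy). Qed.

Lemma tsup_least (F : T -> Prop) R : is_tideal R ->
  (forall S, F S -> forall x y, tmem S x y -> R x y) ->
  forall x y, tmem (tsup A Q la ra F) x y -> R x y.
Proof. intros HR H x y Hxy; exact (Hxy R H HR). Qed.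

Lemma tmeet_iff S S' x y : tmem (tmeet A Q la ra S S') x y <-> tmem S x y /\ tmem S' x y.
Proof.
  split.
  - intros H; split; apply H; auto using tmem_tideal.
  - intros [H1 H2] R [-> | ->] _; auto.
Qed.

Lemma ttop_in x y : tmem (ttop A Q la ra) x y.
Proof. intros R []. Qed.

Lemma tideal_restrict R x y : is_tideal R -> is_tideal (fun a b => R (meet a x) (meet b y)).
Proof.
  intros HR; split; [|split; [|split]].
  - intros a b a' b' H Ha Hb; eapply tideal_down; eauto; apply (fmeet_mono HQ); auto using fle_refl.
  - intros P b H; rewrite (fmeet_comm HQ), (fr_distr Q HQ); apply tideal_supl; auto.
    intros z [p [Hp ->]]; rewrite (fmeet_comm HQ); auto.
  - intros a P H; rewrite (fmeet_comm HQ (fsup Q P)), (fr_distr Q HQ); apply tideal_supr; auto.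
    intros z [p [Hp ->]]; rewrite (fmeet_comm HQ y p); auto.
  - intros a c b; rewrite la_meet, (tideal_bal R HR), ra_meet; tauto.
Qed.

(* Tensor ideals are closed under relative implication; this is what makes their
   lattice distributive. *)
Definition rel_imp (S S' : Q -> Q -> Prop) : Q -> Q -> Prop :=
  fun a b => forall a' b', le a' a -> le b' b -> S a' b' -> S' a' b'.

Lemma tideal_rel_imp S S' : is_tideal S -> is_tideal S' -> is_tideal (rel_imp S S').
Proof.
  intros HS HS'; unfold rel_imp; split; [|split; [|split]].
  - intros a b a0 b0 H Ha Hb a' b' Ha' Hb' Hs; apply H; eauto using fle_trans.
  - intros P b H a' b' Ha' Hb' Hs.
    rewrite <- (fmeet_eq_l HQ a' (fsup Q P) Ha'), (fr_distr Q HQ).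
    apply tideal_supl; auto; intros z [p [Hp ->]].
    apply (H p Hp); auto using fmeet_r.
    eapply tideal_down; eauto using fmeet_l, fle_refl.
  - intros a P H a' b' Ha' Hb' Hs.
    rewrite <- (fmeet_eq_l HQ b' (fsup Q P) Hb'), (fr_distr Q HQ).
    apply tideal_supr; auto; intros z [p [Hp ->]].
    apply (H p Hp); auto using fmeet_r.
    eapply tideal_down; eauto using fmeet_l, fle_refl.
  - intros a c b; split.
    + intros H a' b' Ha' Hb' Hs.
      assert (E : ra a' c = a').
      { rewrite <- meet_ra_top; apply (fmeet_eq_r HQ).
        eapply (fle_trans HQ); [exact Ha' | apply ra_mono_l, (ftop_ge HQ)]. }
      rewrite <- E; apply (tideal_bal S' HS'), H.
      * eapply (fle_trans HQ); [exact Ha' | rewrite <- meet_ra_top; apply (fmeet_r HQ)].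
      * now apply la_mono_r.
      * apply (tideal_bal S HS); now rewrite E.
    + intros H a' b' Ha' Hb' Hs.
      assert (E : la c (meet b b') = b').
      { rewrite <- la_meet; now apply (fmeet_eq_r HQ). }
      rewrite <- E; apply (tideal_bal S' HS'), H.
      * now apply ra_mono_l.
      * apply (fmeet_l HQ).
      * apply (tideal_bal S HS); now rewrite E.
Qed.

Lemma tens_mono x y x' y' a b : le x x' -> le y y' -> tmem (x ⊗ y) a b -> tmem (x' ⊗ y') a b.
Proof.
  intros Hx Hy; apply tens_least; [apply tmem_tideal|].
  eapply tideal_down; eauto using tmem_tideal, tens_in.
Qed.

Lemma tens_meet x y x' y' : meet x x' ⊗ meet y y' = tmeet A Q la ra (x ⊗ y) (x' ⊗ y').
Proof.
  apply tcar_ext; intros a b; rewrite tmeet_iff; split.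
  - intros H; split; revert H; apply tens_mono;
      solve [apply (fmeet_l HQ) | apply (fmeet_r HQ)].
  - intros [H H'].
    set (U := meet x x' ⊗ meet y y').
    assert (Hx' : forall a b, tmem (x' ⊗ y') a b -> tmem U (meet a x) (meet b y)).
    { apply (tens_least (fun a b => tmem U (meet a x) (meet b y))).
      - apply tideal_restrict, tmem_tideal.
      - rewrite (fmeet_comm HQ x'), (fmeet_comm HQ y'); apply tens_in. }
    refine (tens_least (rel_imp (tmem (x' ⊗ y')) (tmem U)) x y _ _ a b H a b _ _ H');
      auto using fle_refl, tideal_rel_imp, tmem_tideal.
    intros a' b' Ha Hb Hs; pose proof (Hx' _ _ Hs) as K.
    now rewrite (fmeet_eq_l HQ _ _ Ha), (fmeet_eq_l HQ _ _ Hb) in K.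
Qed.

Lemma tensor_frame_is_frame : is_frame QxQ.
Proof.
  split; unfold_QxQ; unfold tle.
  - auto.
  - auto.
  - intros S S' H H'; apply tcar_ext; split; auto.
  - intros P S HS x y H; eapply tsup_in; eauto.
  - intros P S H x y Hxy; exact (tsup_least P (tmem S) (tmem_tideal S) H x y Hxy).
  - intros S S' x y H; apply tmeet_iff in H; tauto.
  - intros S S' x y H; apply tmeet_iff in H; tauto.
  - intros S S' S'' H H' x y Hxy; apply tmeet_iff; auto.
  - intros S x y _; apply ttop_in.
  - intros S F; apply tcar_ext; intros a b; split.
    + intros H; apply tmeet_iff in H; destruct H as [HS HF].
      set (V := tsup A Q la ra (image (tmeet A Q la ra S) F)).
      refine (tsup_least F (rel_imp (tmem S) (tmem V)) _ _ a b HF a b _ _ HS);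
        auto using fle_refl, tideal_rel_imp, tmem_tideal.
      intros S' HS' x y Hxy a' b' Ha Hb Hs; eapply tsup_in.
      * exists S'; split; [exact HS' | reflexivity].
      * apply tmeet_iff; split; [exact Hs|]; eapply tideal_down; eauto using tmem_tideal.
    + apply tsup_least; [apply tmem_tideal|].
      intros S' [S'' [HS'' ->]] x y H; apply tmeet_iff in H; destruct H as [H1 H2].
      apply tmeet_iff; split; [exact H1 | eapply tsup_in; eauto].
Qed.

Lemma tens_split x y : x ⊗ y = tmeet A Q la ra (x ⊗ top) (top ⊗ y).
Proof. now rewrite <- tens_meet, (fmeet_top_r HQ), (fmeet_top_l HQ). Qed.

Lemma tens_top : top ⊗ top = ttop A Q la ra.
Proof.
  apply tcar_ext; intros a b; split; intros _; [apply ttop_in|].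
  eapply tideal_down; eauto using tmem_tideal, tens_in, ftop_ge.
Qed.

Lemma tens_supl (P : Q -> Prop) y : fsup Q P ⊗ y = tsup A Q la ra (image (fun x => x ⊗ y) P).
Proof.
  apply tcar_ext; intros a b; split.
  - apply tens_least, tideal_supl; auto using tmem_tideal.
    intros x Hx; eapply tsup_in; [exists x; split; [exact Hx | reflexivity] | apply tens_in].
  - apply tsup_least; [apply tmem_tideal|]; intros S [x [Hx ->]] a' b'.
    apply tens_mono; auto using fsup_ub, fle_refl.
Qed.

Lemma tens_supr x (P : Q -> Prop) : x ⊗ fsup Q P = tsup A Q la ra (image (fun y => x ⊗ y) P).
Proof.
  apply tcar_ext; intros a b; split.
  - apply tens_least, tideal_supr; auto using tmem_tideal.
    intros y Hy; eapply tsup_in; [exists y; split; [exact Hy | reflexivity] | apply tens_in].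
  - apply tsup_least; [apply tmem_tideal|]; intros S [y [Hy ->]] a' b'.
    apply tens_mono; auto using fsup_ub, fle_refl.
Qed.

Lemma pi1_hom : frame_hom Q QxQ p1.
Proof.
  unfold pi1; split; unfold_QxQ.
  - intro P; apply tens_supl.
  - intros x x'; now rewrite <- tens_meet, (fmeet_idem HQ).
  - exact tens_top.
Qed.

Lemma pi2_hom : frame_hom Q QxQ p2.
Proof.
  unfold pi2; split; unfold_QxQ.
  - intro P; apply tens_supr.
  - intros y y'; now rewrite <- tens_meet, (fmeet_idem HQ).
  - exact tens_top.
Qed.

Lemma pi1_rstar a : p1 (rs a) = p2 (ds a).
Proof.
  unfold pi1, pi2, dstar; rewrite rstar_eq.
  apply tcar_ext; intros x y; split;
    apply tens_least; auto using tmem_tideal; apply (tideal_bal _ (tmem_tideal _)), tens_in.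
Qed.

Section Copairing.
Variables (X : frame_ops) (f g : Q -> X).
Hypotheses (HX : is_frame X) (Hf : frame_hom Q X f) (Hg : frame_hom Q X g)
  (Hfg : forall a, f (rs a) = g (ds a)).

Definition copair (S : T) : X :=
  fsup X (fun z => exists a b, tmem S a b /\ z = fmeet X (f a) (g b)).

Lemma copair_tideal w : is_tideal (fun a b => fle X (fmeet X (f a) (g b)) w).
Proof.
  split; [|split; [|split]].
  - intros a b a' b' H Ha Hb; eapply (fle_trans HX); [|exact H].
    apply (fmeet_mono HX); [apply (frame_hom_mono HQ HX f Hf) | apply (frame_hom_mono HQ HX g Hg)];
      assumption.
  - intros P b H; rewrite (fh_sup _ _ _ Hf); apply (fsup_meet_le HX).
    intros p [x [Hx ->]]; auto.
  - intros a P H; rewrite (fh_sup _ _ _ Hg); apply (fmeet_sup_le HX).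
    intros p [y [Hy ->]]; auto.
  - intros a c b.
    replace (fmeet X (f a) (g (la c b))) with (fmeet X (f (ra a c)) (g b)); [tauto|].
    rewrite <- meet_la_top, <- (meet_ra_top c a), (fh_meet _ _ _ Hf), (fh_meet _ _ _ Hg).
    rewrite <- rstar_eq, Hfg; unfold dstar.
    rewrite (fmeet_comm HX (g (la c top)) (f a)); apply (fmeet_assoc HX).
Qed.

Lemma copair_ub S a b : tmem S a b -> fle X (fmeet X (f a) (g b)) (copair S).
Proof. intros H; apply (fsup_ub HX); exists a, b; auto. Qed.

Lemma copair_mono (S S' : T) :
  (forall a b, tmem S a b -> tmem S' a b) -> fle X (copair S) (copair S').
Proof. intros H; apply (fsup_least HX); intros z [a [b [Hab ->]]]; apply copair_ub; auto. Qed.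

Lemma copair_hom : frame_hom QxQ X copair.
Proof.
  split; unfold_QxQ.
  - intros F; apply (fle_antisym HX).
    + apply (fsup_least HX); intros z [a [b [Hab ->]]].
      refine (tsup_least F _ (copair_tideal _) _ a b Hab).
      intros S HS x y Hxy; eapply (fle_trans HX); [apply copair_ub; exact Hxy|].
      apply (fsup_ub HX); exists S; auto.
    + apply (fsup_least HX); intros z [S [HS ->]].
      apply copair_mono; intros a b H; eapply tsup_in; eauto.
  - intros S S'; apply (fle_antisym HX).
    + apply (fmeet_glb HX); apply copair_mono; intros a b H; apply tmeet_iff in H; tauto.
    + apply (fsup_meet_le HX); intros z [a [b [Hab ->]]].
      apply (fmeet_sup_le HX); intros z [a' [b' [Hab' ->]]].
      rewrite (fmeet_ACA HX), <- (fh_meet _ _ _ Hf), <- (fh_meet _ _ _ Hg).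
      apply copair_ub, tmeet_iff; split; (eapply tideal_down; [apply tmem_tideal | eassumption | |]);
        solve [apply (fmeet_l HQ) | apply (fmeet_r HQ)].
  - apply (fle_antisym HX); [apply (ftop_ge HX)|].
    rewrite <- (fmeet_idem HX (ftop X)), <- (fh_top _ _ _ Hf) at 1; rewrite <- (fh_top _ _ _ Hg).
    apply copair_ub, ttop_in.
Qed.

Lemma copair_pi1 q : copair (p1 q) = f q.
Proof.
  apply (fle_antisym HX).
  - apply (fsup_least HX); intros z [a [b [Hab ->]]].
    refine (tens_least _ q top (copair_tideal (f q)) _ a b Hab); apply (fmeet_l HX).
  - rewrite <- (fmeet_top_r HX (f q)), <- (fh_top _ _ _ Hg); apply copair_ub, tens_in.
Qed.

Lemma copair_pi2 q : copair (p2 q) = g q.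
Proof.
  apply (fle_antisym HX).
  - apply (fsup_least HX); intros z [a [b [Hab ->]]].
    refine (tens_least _ top q (copair_tideal (g q)) _ a b Hab); apply (fmeet_r HX).
  - rewrite <- (fmeet_top_l HX (g q)), <- (fh_top _ _ _ Hf); apply copair_ub, tens_in.
Qed.

End Copairing.

Lemma frame_hom_tensor_copair (X : frame_ops) (h : T -> X) : frame_hom QxQ X h ->
  forall S, h S = copair X (fun a => h (p1 a)) (fun b => h (p2 b)) S.
Proof.
  intros Hh S.
  assert (ES : S = tsup A Q la ra (fun S' => exists a b, tmem S a b /\ S' = a ⊗ b)).
  { apply tcar_ext; intros a b; split.
    - intros H; eapply tsup_in; [exists a, b; split; [exact H | reflexivity] | apply tens_in].
    - apply tsup_least; [apply tmem_tideal|]; intros S' [x [y [Hxy ->]]].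
      apply tens_least; [apply tmem_tideal | exact Hxy]. }
  destruct Hh as [h_sup h_meet _]; unfold sup_pres in h_sup; unfold_QxQ.
  rewrite ES at 1; rewrite h_sup; unfold copair; f_equal.
  apply functional_extensionality; intro z; apply propositional_extensionality; split.
  - intros [S' [[a [b [Hab ->]]] ->]]; exists a, b; split; [exact Hab|].
    now rewrite tens_split, h_meet.
  - intros [a [b [Hab ->]]]; exists (a ⊗ b); split; [exists a, b; auto|].
    now rewrite tens_split, h_meet.
Qed.

Lemma tensor_pullback : is_pullback A Q QxQ rs ds p1 p2.
Proof.
  split; [exact pi1_rstar|].
  intros X HX f g Hf Hg Hfg; exists (copair X f g).
  split; [|split; [|split]].
  - apply copair_hom; auto.
  - apply copair_pi1; auto.
  - apply copair_pi2; auto.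
  - intros h Hh H1 H2 S; rewrite (frame_hom_tensor_copair X h Hh).
    unfold copair; f_equal.
    apply functional_extensionality; intro z; apply propositional_extensionality.
    now setoid_rewrite H1; setoid_rewrite H2.
Qed.

Lemma mul_le_tideal q : is_tideal (fun x y => le (mul x y) q).
Proof.
  split; [|split; [|split]].
  - intros x y x' y' H Hx Hy; eapply (fle_trans HQ); [apply mul_mono; eassumption | exact H].
  - intros P y H; rewrite (q_supl _ _ _ _ _ Hq); apply (fsup_least HQ); intros z [x [Hx ->]]; auto.
  - intros x P H; rewrite (q_supr _ _ _ _ _ Hq); apply (fsup_least HQ); intros z [y [Hy ->]]; auto.
  - intros x a y; rewrite (q_mid _ _ _ _ _ Hq); tauto.
Qed.

Lemma mstar_mem q x y : tmem (ms q) x y <-> le (mul x y) q.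
Proof.
  split.
  - apply (tsup_least _ _ (mul_le_tideal q)); intros S [a [b [Hab ->]]].
    apply tens_least; [apply mul_le_tideal | exact Hab].
  - intros H; eapply tsup_in; [exists x, y; split; [exact H | reflexivity] | apply tens_in].
Qed.

Lemma mstar_mu_right : ms = mu_right A Q la ra mul.
Proof.
  apply functional_extensionality; intro q; apply tcar_ext; intros x y; rewrite mstar_mem; split.
  - intros H; eapply tsup_in; [|apply tens_in].
    apply (fsup_least HQ); intros z [a [b [Hab ->]]].
    exact (tens_least _ x y (mul_le_tideal q) H a b Hab).
  - apply (tsup_least _ _ (mul_le_tideal q)); intros S HS a b Hab.
    eapply (fle_trans HQ); [|exact HS]; apply (fsup_ub HQ); exists a, b; auto.
Qed.

Lemma mstar_hom : multiplicative A Q la ra mul -> frame_hom Q QxQ ms.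
Proof.
  intros Hmult; split; unfold_QxQ.
  - rewrite mstar_mu_right; exact Hmult.
  - intros a b; apply tcar_ext; intros x y; rewrite tmeet_iff, !mstar_mem; split.
    + intros H; split; (eapply (fle_trans HQ); [exact H|]); [apply (fmeet_l HQ) | apply (fmeet_r HQ)].
    + intros [H1 H2]; now apply (fmeet_glb HQ).
  - apply tcar_ext; intros x y; rewrite mstar_mem; split; intros _; [apply ttop_in | apply (ftop_ge HQ)].
Qed.

Lemma copair_mstar (X : frame_ops) (h : T -> X) (f g : Q -> X) :
  frame_hom QxQ X h -> (forall q, h (p1 q) = f q) -> (forall q, h (p2 q) = g q) ->
  forall q, h (ms q) = fsup X (fun z => exists a b, le (mul a b) q /\ z = fmeet X (f a) (g b)).
Proof.
  intros Hh H1 H2 q; rewrite (frame_hom_tensor_copair X h Hh); unfold copair; f_equal.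
  apply functional_extensionality; intro z; apply propositional_extensionality.
  setoid_rewrite mstar_mem; setoid_rewrite H1; setoid_rewrite H2; reflexivity.
Qed.

Lemma mstar_assoc (X : frame_ops) (HX : is_frame X) (x y z : Q -> X) (h1 h2 h3 h4 : T -> X) :
  frame_hom QxQ X h1 -> frame_hom QxQ X h2 -> frame_hom QxQ X h3 -> frame_hom QxQ X h4 ->
  (forall q, h1 (p1 q) = x q) -> (forall q, h1 (p2 q) = y q) ->
  (forall q, h2 (p1 q) = y q) -> (forall q, h2 (p2 q) = z q) ->
  (forall q, h3 (p1 q) = h1 (ms q)) -> (forall q, h3 (p2 q) = z q) ->
  (forall q, h4 (p1 q) = x q) -> (forall q, h4 (p2 q) = h2 (ms q)) ->
  forall q, h3 (ms q) = h4 (ms q).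
Proof.
  intros Hh1 Hh2 Hh3 Hh4 E11 E12 E21 E22 E31 E32 E41 E42 q.
  rewrite (copair_mstar X h3 _ _ Hh3 E31 E32), (copair_mstar X h4 _ _ Hh4 E41 E42).
  apply (fle_antisym HX); apply (fsup_least HX); intros w [a [b [Hab ->]]].
  - rewrite (copair_mstar X h1 _ _ Hh1 E11 E12).
    apply (fsup_meet_le HX); intros p [c [d [Hcd ->]]]; rewrite (fmeet_assoc HX).
    apply (fle_trans HX _ (fmeet X (x c) (h2 (ms (mul d b))))).
    + apply (fmeet_mono HX); [apply (fle_refl HX)|].
      rewrite (copair_mstar X h2 _ _ Hh2 E21 E22); apply (fsup_ub HX).
      exists d, b; split; [apply (fle_refl HQ) | reflexivity].
    + apply (fsup_ub HX); exists c, (mul d b); split; [|reflexivity].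
      rewrite <- (q_assoc _ _ _ _ _ Hq); eapply (fle_trans HQ); [|exact Hab].
      apply mul_mono; [exact Hcd | apply (fle_refl HQ)].
  - rewrite (copair_mstar X h2 _ _ Hh2 E21 E22).
    apply (fmeet_sup_le HX); intros p [c [d [Hcd ->]]]; rewrite <- (fmeet_assoc HX).
    apply (fle_trans HX _ (fmeet X (h1 (ms (mul a c))) (z d))).
    + apply (fmeet_mono HX); [|apply (fle_refl HX)].
      rewrite (copair_mstar X h1 _ _ Hh1 E11 E12); apply (fsup_ub HX).
      exists a, c; split; [apply (fle_refl HQ) | reflexivity].
    + apply (fsup_ub HX); exists (mul a c), d; split; [|reflexivity].
      rewrite (q_assoc _ _ _ _ _ Hq); eapply (fle_trans HQ); [|exact Hab].
      apply mul_mono; [apply (fle_refl HQ) | exact Hcd].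
Qed.

Lemma copair_mstar_eq (X : frame_ops) (x : Q -> X) (h : T -> X) (f g rhs : Q -> Q) :
  frame_hom Q X x -> frame_hom QxQ X h ->
  (forall q, h (p1 q) = x (f q)) -> (forall q, h (p2 q) = x (g q)) ->
  (forall q, fsup Q (fun w => exists a b, le (mul a b) q /\ w = meet (f a) (g b)) = rhs q) ->
  forall q, h (ms q) = x (rhs q).
Proof.
  intros Hx Hh H1 H2 Hrhs q.
  rewrite (copair_mstar X h _ _ Hh H1 H2), <- Hrhs, (fh_sup _ _ _ Hx); f_equal.
  apply functional_extensionality; intro w; apply propositional_extensionality; split.
  - intros [a [b [Hab ->]]]; exists (meet (f a) (g b)); split; [exists a, b; auto|].
    now rewrite (fh_meet _ _ _ Hx).
  - intros [w' [[a [b [Hab ->]]] ->]]; exists a, b; split; [exact Hab|].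
    now rewrite (fh_meet _ _ _ Hx).
Qed.

Section Support.
Variable sg : Q -> A.
Hypothesis Hsg : support A Q la mul inv sg.

Lemma support_ra_le z w : le (ra z (sg w)) (mul (mul z w) (inv w)).
Proof.
  pose proof (sp_le _ _ _ _ _ _ Hsg w (inv z)) as H; apply inv_mono in H.
  rewrite inv_la, inv_inv, !inv_mul, !inv_inv in H.
  now rewrite (q_assoc _ _ _ _ _ Hq).
Qed.

Lemma support_ra_fix x : ra x (sg (inv x)) = x.
Proof. apply inv_inj; rewrite inv_ra; apply (sp_fix _ _ _ _ _ _ Hsg). Qed.

Lemma mstar_dstar a : ms (ds a) = p1 (ds a).
Proof.
  unfold pi1, dstar; apply tcar_ext; intros x y; rewrite mstar_mem; split.
  - (* balance [(x, y)] to [(x ◁ ς y, y)], where [x ◁ ς y ≤ x y y^* ≤ d^* a] *)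
    intros H; rewrite <- (sp_fix _ _ _ _ _ _ Hsg y).
    apply (tideal_bal _ (tmem_tideal _)).
    eapply tideal_down; [apply tmem_tideal | apply tens_in | | apply (ftop_ge HQ)].
    eapply (fle_trans HQ); [apply support_ra_le|].
    eapply (fle_trans HQ); [apply mul_mono; [exact H | apply (fle_refl HQ)]|].
    rewrite (q_la _ _ _ _ _ Hq); apply la_mono_r, (ftop_ge HQ).
  - apply (tens_least _ _ _ (mul_le_tideal _)).
    rewrite (q_la _ _ _ _ _ Hq); apply la_mono_r, (ftop_ge HQ).
Qed.

Lemma mstar_rstar a : ms (rs a) = p2 (rs a).
Proof.
  unfold pi2; rewrite rstar_eq; apply tcar_ext; intros x y; rewrite mstar_mem; split.
  - intros H; rewrite <- (support_ra_fix x).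
    apply (tideal_bal _ (tmem_tideal _)).
    eapply tideal_down; [apply tmem_tideal | apply tens_in | apply (ftop_ge HQ) |].
    eapply (fle_trans HQ); [apply (sp_le _ _ _ _ _ _ Hsg)|].
    rewrite inv_inv, !(q_assoc _ _ _ _ _ Hq).
    eapply (fle_trans HQ); [apply mul_mono; [apply (fle_refl HQ) | exact H]|].
    rewrite <- (q_ra _ _ _ _ _ Hq); apply ra_mono_l, (ftop_ge HQ).
  - apply (tens_least _ _ _ (mul_le_tideal _)).
    rewrite <- (q_ra _ _ _ _ _ Hq); apply ra_mono_l, (ftop_ge HQ).
Qed.

Lemma dstar_open : equivariant A Q la sg -> open_map A Q ds.
Proof.
  intros Heqv; exists sg; unfold dstar; split.
  - intros y a; split.
    + intros H; rewrite <- (sp_fix _ _ _ _ _ _ Hsg y).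
      eapply (fle_trans HQ); [apply la_mono_r, (ftop_ge HQ) | now apply la_mono_l].
    + intros H; apply (sup_pres_mono HQ HA sg (sp_sup _ _ _ _ _ _ Hsg)) in H.
      now rewrite Heqv, (sp_top _ _ _ _ _ _ Hsg), (fmeet_top_r HA) in H.
  - intros y a; now rewrite (fmeet_comm HQ), meet_la_top, Heqv, (fmeet_comm HA).
Qed.

End Support.

Variable ups : Q -> A.
Hypotheses (Hrefl : reflexive A Q la ra ups) (Hunit : unit_laws A Q la mul ups)
  (Hinvlaw : inverse_law A Q la mul inv ups).

Lemma ups_dstar a : ups (ds a) = a. Proof. apply Hrefl. Qed.

Lemma ups_rstar a : ups (rs a) = a. Proof. rewrite rstar_eq; apply Hrefl. Qed.

Lemma ups_inv x : ups (inv x) = ups x.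
Proof.
  rewrite <- (ups_dstar (ups (inv x))), <- (ups_dstar (ups x)); f_equal; unfold dstar.
  rewrite !Hinvlaw; apply (fsup_ext HQ); intro w.
  split; intros [a [b [Hab ->]]]; exists b, a; rewrite (fmeet_comm HQ); split; auto.
  - apply inv_le_l in Hab; now rewrite inv_mul, inv_inv in Hab.
  - apply inv_le_l; now rewrite inv_mul, inv_inv.
Qed.

Lemma unit_law_l q : fsup Q (fun w => exists a b, le (mul a b) q /\ w = meet (ds (ups a)) b) = q.
Proof.
  etransitivity; [|apply (Hunit q)]; apply (fsup_ext HQ); intro w.
  unfold dstar; setoid_rewrite meet_la_top; reflexivity.
Qed.

Lemma unit_law_r q : fsup Q (fun w => exists a b, le (mul a b) q /\ w = meet a (rs (ups b))) = q.
Proof.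
  (* the involution maps this join onto the one of the unit law at [q^*] *)
  apply inv_inj; rewrite (inv_sup _ _ _ _ _ _ Hinv), <- (Hunit (inv q)); apply (fsup_ext HQ); intro w.
  split.
  - intros [v [[a [b [Hab ->]]] ->]]; exists (inv b), (inv a); split.
    + rewrite <- inv_mul; now apply inv_mono.
    + now rewrite meet_rstar, inv_ra, ups_inv.
  - intros [x [y [Hxy ->]]]; exists (meet (inv y) (rs (ups (inv x)))); split.
    + exists (inv y), (inv x); split; [|reflexivity].
      rewrite <- inv_mul; now apply inv_le_l.
    + now rewrite meet_rstar, inv_ra, inv_inv, ups_inv.
Qed.

Lemma inverse_law_r q : fsup Q (fun w => exists a b, le (mul a b) q /\ w = meet a (inv b)) = ds (ups q).
Proof.
  unfold dstar; rewrite Hinvlaw; apply (fsup_ext HQ); intro w; split.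
  - intros [a [b [Hab ->]]]; exists a, (inv b); now rewrite inv_inv.
  - intros [a [b [Hab ->]]]; exists a, (inv b); now rewrite inv_inv.
Qed.

Lemma inverse_law_l q : fsup Q (fun w => exists a b, le (mul a b) q /\ w = meet (inv a) b) = rs (ups q).
Proof.
  unfold rstar; rewrite <- inverse_law_r, (inv_sup _ _ _ _ _ _ Hinv); apply (fsup_ext HQ); intro w.
  split.
  - intros [a [b [Hab ->]]]; exists (meet a (inv b)); split; [exists a, b; auto|].
    now rewrite inv_meet, inv_inv.
  - intros [v [[a [b [Hab ->]]] ->]]; exists a, b; split; [exact Hab|].
    now rewrite inv_meet, inv_inv.
Qed.

Lemma groupoid_quantale_localic_groupoid sg :
  support A Q la mul inv sg -> multiplicative A Q la ra mul ->
  localic_groupoid A Q QxQ ds rs ups inv ms p1 p2.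
Proof.
  intros Hsg Hmult; split.
  - exact HA.
  - exact HQ.
  - exact tensor_frame_is_frame.
  - exact dstar_hom.
  - exact rstar_hom.
  - exact (proj1 Hrefl).
  - exact inv_hom.
  - exact (mstar_hom Hmult).
  - exact pi1_hom.
  - exact pi2_hom.
  - exact tensor_pullback.
  - exact ups_dstar.
  - exact ups_rstar.
  - exact inv_inv.
  - reflexivity.
  - exact (mstar_dstar sg Hsg).
  - exact (mstar_rstar sg Hsg).
  - intros X HX x y z _ _ _; exact (mstar_assoc X HX x y z).
  - intros X _ x Hx h Hh H1 H2; exact (copair_mstar_eq X x h _ _ _ Hx Hh H1 H2 unit_law_l).
  - intros X _ x Hx h Hh H1 H2; exact (copair_mstar_eq X x h _ _ _ Hx Hh H1 H2 unit_law_r).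
  - intros X _ x Hx h Hh H1 H2; exact (copair_mstar_eq X x h _ _ _ Hx Hh H1 H2 inverse_law_r).
  - intros X _ x Hx h Hh H1 H2; exact (copair_mstar_eq X x h _ _ _ Hx Hh H1 H2 inverse_law_l).
Qed.

End GroupoidQuantale.

Theorem theorem5p6 (A Q : frame_ops) (la : A -> Q -> Q) (ra : Q -> A -> Q)
    (mul : Q -> Q -> Q) (inv : Q -> Q) (ups : Q -> A) :
  groupoid_quantale A Q la ra mul inv ups ->
  open_localic_groupoid A Q (tensor_frame A Q la ra)
    (dstar A Q la) (rstar A Q la inv) ups inv
    (mstar A Q la ra mul) (pi1 A Q la ra) (pi2 A Q la ra).
Proof.
  intros [[HA HQ Hq Hinv Hla Hra] [Hmult [[sg [Hsg Heqv]] [Hrefl [Hunit Hinvlaw]]]]].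
  split.
  - exact (groupoid_quantale_localic_groupoid _ _ _ _ _ _ HA HQ Hq Hinv Hla Hra
             ups Hrefl Hunit Hinvlaw sg Hsg Hmult).
  - exact (dstar_open _ _ _ _ _ _ HA HQ Hq Hla sg Hsg Heqv).
Qed.
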